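(* Let $(X,\tau)$ be a topological space and let $\mathcal{F}:\mathcal{O}(X)^{\mathrm{op}}\to\mathbf{Set}$ be a stonean sheaf with $\mathcal{F}(X)\neq\emptyset$. Then $\mathcal{F}(U)=\{f\restriction U: f\in\mathcal{F}(X)\}$ for all $U\in\mathcal{O}(X)$.
   Context: $\mathcal{O}(X)$ is the set of non-empty open subsets of $X$ ordered by inclusion; a presheaf is a functor $\mathcal{F}:\mathcal{O}(X)^{\mathrm{op}}\to\mathbf{Set}$ and $f\restriction U=\mathcal{F}(U\subseteq V)(f)$ for $f\in\mathcal{F}(V)$. A family $\{f_i\}$ with $f_i\in\mathcal{F}(U_i)$ is compatible if $f_i\restriction W=f_j\restriction W$ for all $i,j$ and non-empty open $W\subseteq U_i\cap U_j$; a collation on $U$ is $f\in\mathcal{F}(U)$ with $f\restriction W=f_i\restriction W$ for all $i$ and non-empty open $W\subseteq U\cap U_i$. $\{U_i\}$ is a dense covering of $U$ if every non-empty open $V\subseteq U$ meets some $U_i$ in a non-empty open set. $\mathcal{F}$ is a stonean sheaf if every compatible family indexed by a dense covering of $U$ has a unique collation on $U$. *)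

From HB Require Import structures.
From mathcomp Require Import all_boot.
From mathcomp Require Import boolp classical_sets topology.
Set Implicit Arguments. Unset Strict Implicit. Unset Printing Implicit Defensive.
Local Open Scope classical_set_scope.

Definition isO (X : topologicalType) (U : set X) : Prop := open U /\ U !=set0.

(* A presheaf O(X)^op -> Set: sections F U for U in O(X) (values on other
   subsets are irrelevant), restriction maps along inclusions, functorial. *)
Record presheaf (X : topologicalType) := Presheaf {
  sec : set X -> Type;
  res : forall U V : set X, U `<=` V -> sec V -> sec U;
  res_id : forall U (h : U `<=` U) (f : sec U), isO U -> res h f = f;
  res_comp : forall U V W (h1 : U `<=` V) (h2 : V `<=` W) (h3 : U `<=` W)
      (f : sec W), isO U -> isO V -> isO W -> res h1 (res h2 f) = res h3 f }.

Section Defs.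
Variables (X : topologicalType) (F : presheaf X).

Definition compatible (I : Type) (U : I -> set X) (f : forall i, sec F (U i)) :=
  forall i j (W : set X) (hi : W `<=` U i) (hj : W `<=` U j),
    isO W -> res hi (f i) = res hj (f j).

Definition collation (I : Type) (U : I -> set X) (f : forall i, sec F (U i))
    (V : set X) (g : sec F V) :=
  forall i (W : set X) (hV : W `<=` V) (hi : W `<=` U i),
    isO W -> res hV g = res hi (f i).

Definition dense_covering (I : Type) (U : I -> set X) (V : set X) :=
  (forall i, isO (U i)) /\
  forall W : set X, isO W -> W `<=` V -> exists i, isO (W `&` U i).

Definition stonean_sheaf :=
  forall (V : set X) (I : Type) (U : I -> set X) (f : forall i, sec F (U i)),
    isO V -> dense_covering U V -> compatible f ->
    exists g : sec F V, collation f g /\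
      forall g' : sec F V, collation f g' -> g' = g.
End Defs.

From mathcomp Require Import all_boot.
From mathcomp Require Import boolp classical_sets topology.
Set Implicit Arguments. Unset Strict Implicit. Unset Printing Implicit Defensive.
Local Open Scope classical_set_scope.

(* An open set U and its exterior ~` closure U are disjoint, and every
   non-empty open set meets one of them; so they form a dense covering of X
   (dropping the exterior when it is empty).  A family indexed by pairwise
   disjoint sets is vacuously compatible, hence g on U together with the
   restriction of any global section to the exterior collates to a global
   section, which restricts to g on U. *)

Lemma open_meets_or_sub_exterior (X : topologicalType) (U W : set X) :
  open W -> W `&` U !=set0 \/ W `<=` ~` closure U.
Proof.
move=> Wopen; have [|WU] := pselect (W `&` U !=set0); first by left.
right=> x Wx Ux; apply: WU.
have [y [Uy Wy]] := Ux W (open_nbhs_nbhs (conj Wopen Wx)).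
by exists y.
Qed.

Lemma isO_setT (X : topologicalType) (U : set X) : isO U -> isO [set: X].
Proof. by move=> [_ [x _]]; split; [exact: openT | exists x]. Qed.

Section Collation.
Variables (X : topologicalType) (F : presheaf X).

Lemma compatible_disjoint (I : Type) (U : I -> set X)
    (f : forall i, sec F (U i)) :
  (forall i j x, U i x -> U j x -> i = j) -> compatible f.
Proof.
move=> disjU i j W hi hj [_ [w Ww]].
have eij := disjU i j w (hi w Ww) (hj w Ww); subst j.
by rewrite (Prop_irrelevance hi hj).
Qed.

Lemma collation_res (I : Type) (U : I -> set X) (f : forall i, sec F (U i))
    (V : set X) (g : sec F V) :
  collation f g ->
  forall i (h : U i `<=` V), isO (U i) -> res h g = f i.
Proof.
by move=> gf i h Ui; rewrite (gf i (U i) h (@subset_refl _ _) Ui) res_id.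
Qed.

End Collation.

Section OpenAndExterior.
Variables (X : topologicalType) (U : set X).
Hypothesis isO_U : isO U.

Definition piece (b : bool) : set X := if b then U else ~` closure U.

Definition piece_index := {b : bool | isO (piece b)}.

Definition pieces (i : piece_index) : set X := piece (proj1_sig i).

Lemma pieces_disjoint i j x : pieces i x -> pieces j x -> i = j.
Proof.
have UV y : U y -> (~` closure U) y -> False.
  by move=> Uy; apply; exact: subset_closure.
case: i j => [[] p] [[] q] /= Px Qx.
- by rewrite (Prop_irrelevance p q).
- by case: (UV x Px Qx).
- by case: (UV x Qx Px).
- by rewrite (Prop_irrelevance p q).
Qed.

Lemma dense_covering_pieces : dense_covering pieces [set: X].
Proof.
split; first by case.
move=> W [Wopen [w Ww]] _.
have exterior_open : open (~` closure U) by exact/closed_openC/closed_closure.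
case: (open_meets_or_sub_exterior U Wopen) => [WU | WV].
  exists (exist _ true isO_U); split => //.
  by apply: openI => //; case: isO_U.
have isO_V : isO (piece false) by split => //; exists w; exact: WV.
exists (exist _ false isO_V); split; first exact: openI.
by exists w; split => //; exact: WV.
Qed.

End OpenAndExterior.

Lemma extend_section_from_exterior (X : topologicalType) (F : presheaf X)
    (U : set X) :
  stonean_sheaf F -> isO U -> sec F (~` closure U) ->
  forall g : sec F U, exists f : sec F [set: X], res (subsetT U) f = g.
Proof.
move=> SS isO_U gV g.
pose s (b : bool) : sec F (piece U b) :=
  if b return sec F (piece U b) then g else gV.
pose f (i : piece_index U) : sec F (pieces i) := s (proj1_sig i).
have [f' [f'f _]] := SS [set: X] _ (@pieces X U) f (isO_setT isO_U)
  (dense_covering_pieces isO_U) (compatible_disjoint f (@pieces_disjoint X U)).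
exists f'.
exact: (collation_res f'f (i := exist _ true isO_U) (subsetT U) isO_U).
Qed.

Theorem mainTheorem9 (X : topologicalType) (F : presheaf X) :
  stonean_sheaf F -> inhabited (sec F [set: X]) ->
  forall U : set X, isO U ->
    forall g : sec F U, exists (f : sec F [set: X]) (h : U `<=` [set: X]),
      res h f = g.
Proof.
move=> SS [f0] U isO_U g.
have [f fg] := extend_section_from_exterior SS isO_U (res (subsetT _) f0) g.
by exists f, (subsetT U).
Qed.
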